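(* Let $G$ be a connected graph with vertex set $\{u_1,\dots,u_t\}$, $t\ge2$, and let $\mathcal{H}=\{C_{n_1},\dots,C_{n_t}\}$ be a family of cycles with $n_i\ge7$ for all $i$. Then $\dim_l(G\circ\mathcal{H})=\sum_{i=1}^t\lceil n_i/4\rceil$.
   Context: All graphs are finite and simple. For a connected graph $G$, $\dim_l(G)$ is the minimum size of $S\subseteq V(G)$ such that for every two adjacent vertices $x,y$ some $s\in S$ has $d_G(s,x)\ne d_G(s,y)$ ($d_G$ shortest-path distance). Lexicographic product $G\circ\mathcal{H}$ with $H_i=C_{n_i}$: vertex set $\bigcup_i\{u_i\}\times V(H_i)$, $(u_i,v)\sim(u_j,w)$ iff $u_iu_j\in E(G)$, or $i=j$ and $vw\in E(H_i)$. *)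

From mathcomp Require Import all_boot.
Set Implicit Arguments. Unset Strict Implicit. Unset Printing Implicit Defensive.

Section Graphs.
Variable T : finType.
Variable e : rel T.

Fixpoint reach_within (k : nat) (x y : T) : bool :=
  if k is k'.+1 then (x == y) || [exists z, e x z && reach_within k' z y]
  else x == y.

(* Shortest-path distance (equal to #|T| if y is unreachable from x, which
   never happens in a connected graph since shortest paths have < #|T| edges). *)
Definition gdist (x y : T) : nat :=
  find (fun k => reach_within k x y) (iota 0 #|T|).

Definition local_resolving (S : {set T}) : bool :=
  [forall x, forall y, e x y ==> [exists s in S, gdist s x != gdist s y]].

Definition ldim : nat := \big[minn/#|T|]_(S : {set T} | local_resolving S) #|S|.
End Graphs.

Definition cycle_adj (m : nat) : rel 'I_m :=
  fun a b => (val b == (val a).+1 %% m) || (val a == (val b).+1 %% m).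

Definition lex_cycles (t : nat) (e : rel 'I_t) (n : 'I_t -> nat)
  : rel {i : 'I_t & 'I_(n i)} :=
  fun x y => e (tag x) (tag y) ||
             ((tag x == tag y) && cycle_adj (tagged x) (tagged_as x y)).

Definition ceil_div4 (m : nat) : nat := (m + 3) %/ 4.
Arguments lex_cycles {t} e n.

From mathcomp Require Import all_boot zify.
Set Implicit Arguments. Unset Strict Implicit. Unset Printing Implicit Defensive.

(* Within a copy of C_m the lexicographic product looks like C_m with every
   non-adjacent pair at distance 2, because every vertex of G has a neighbour
   whose whole copy is adjacent to the copy.  A vertex outside copy i cannot
   separate two vertices of copy i: rotating copy i is an automorphism fixing
   it.  Hence every edge a -- a+1 of copy i is resolved inside copy i, by a
   vertex of the window a-1, a, a+1, a+2; as each vertex lies in four windows,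
   copy i carries at least ceil(n_i/4) vertices of a resolving set.
   Conversely, the vertices whose position is a multiple of 4 resolve: every
   window contains one, and an edge between copies i and j is resolved by a
   multiple of 4 in copy i that is not adjacent to the endpoint in copy i,
   which exists once n_i >= 7. *)

Section Distances.
Variables (T : finType) (e : rel T).

Lemma reach_withinS k x y : reach_within e k x y -> reach_within e k.+1 x y.
Proof.
elim: k x => [|k IHk] x /=; first by move=> ->.
case/orP=> [->//|/existsP[z /andP[exz zy]]].
by apply/orP; right; apply/existsP; exists z; rewrite exz; exact: IHk.
Qed.

Lemma reach_within_leq k k' x y :
  k <= k' -> reach_within e k x y -> reach_within e k' x y.
Proof. by move/subnK<-; elim: (k' - k) => // d IHd /IHd/reach_withinS. Qed.

Lemma gdist_leq k x y : k < #|T| -> (gdist e x y <= k) = reach_within e k x y.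
Proof.
move=> lt_k_T; rewrite /gdist; apply/idP/idP => [le_d_k|xy_k].
  have has_xy : has (fun k => reach_within e k x y) (iota 0 #|T|).
    by rewrite has_find size_iota (leq_ltn_trans le_d_k).
  have := nth_find 0 has_xy; rewrite nth_iota ?add0n; last first.
    by move: has_xy; rewrite has_find size_iota.
  exact: reach_within_leq.
rewrite leqNgt; apply: contraL xy_k => /(before_find 0).
by rewrite nth_iota // => ->.
Qed.

Lemma reach_within1 x y : reach_within e 1 x y = (x == y) || e x y.
Proof.
congr (_ || _); apply/existsP/idP => [[z /andP[exz /eqP<-]] // | exy].
by exists y; rewrite exy eqxx.
Qed.

Lemma gdist_eq0 x y : (gdist e x y == 0) = (x == y).
Proof. by rewrite -leqn0 gdist_leq //; apply/card_gt0P; exists x. Qed.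

Lemma gdist_edge x y : x != y -> e x y -> gdist e x y = 1.
Proof.
move=> neq_xy exy; have T_gt1 : 1 < #|T| by apply/card_gt1P; exists x, y.
apply/eqP; rewrite eqn_leq gdist_leq // reach_within1 exy orbT.
by rewrite lt0n gdist_eq0.
Qed.

Lemma gdist_common_nbr x y z :
  x != y -> ~~ e x y -> e x z -> e z y -> gdist e x y = 2.
Proof.
move=> neq_xy nexy exz ezy.
have T_gt2 : 2 < #|T|.
  apply/card_gt2P; exists x, y, z; split=> //; split=> //.
    by apply: contraNneq nexy => ->.
  by apply: contraNneq nexy => <-.
apply/eqP; rewrite eqn_leq gdist_leq // ltnNge gdist_leq ?(ltn_trans _ T_gt2) //.
rewrite reach_within1 negb_or neq_xy nexy !andbT.
have zy : reach_within e 1 z y by rewrite reach_within1 ezy orbT.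
by apply/orP; right; apply/existsP; exists z; apply/andP.
Qed.

Section Automorphism.
Variable f : T -> T.
Hypotheses (f_inj : injective f) (f_mono : {mono f : x y / e x y}).

Lemma reach_within_mono k : {mono f : x y / reach_within e k x y}.
Proof.
elim: k => [|k IHk] x y /=; first by rewrite inj_eq.
rewrite inj_eq //; congr (_ || _); apply/existsP/existsP => [[z]|[z]].
  by have /codomP[z' ->] := injF_onto f_inj z; rewrite f_mono IHk; exists z'.
by rewrite -f_mono -IHk; exists (f z).
Qed.

Lemma gdist_mono : {mono f : x y / gdist e x y}.
Proof. by move=> x y; apply: eq_find => k; rewrite reach_within_mono. Qed.
End Automorphism.

Lemma ldim_leq S : local_resolving e S -> ldim e <= #|S|.
Proof.
move=> S_res; rewrite /ldim; move: (mem_index_enum S).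
elim: (index_enum _) => // S' r IHr; rewrite inE big_cons.
case/predU1P=> [<-|/IHr le_r]; first by rewrite S_res geq_minl.
by case: ifP => // _; rewrite geq_min le_r orbT.
Qed.

Lemma leq_ldim k :
  k <= #|T| -> (forall S, local_resolving e S -> k <= #|S|) -> k <= ldim e.
Proof.
move=> k_T k_res; rewrite /ldim.
by elim/big_ind: _ => // p q kp kq; rewrite leq_min kp.
Qed.

Lemma connected_has_nbr :
  1 < #|T| -> (forall x y, connect e x y) -> forall x, exists y, e x y.
Proof.
move=> T_gt1 e_conn x.
have /card_gt0P[y neq_yx] : 0 < #|predC1 x| by rewrite cardC1; lia.
have /connectP[[|z p] /= xp def_y] := e_conn x y.
  by move: neq_yx; rewrite def_y !inE eqxx.
by case/andP: xp => exz _; exists z.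
Qed.
End Distances.

Section Cycle.
Variable m : nat.
Implicit Types a b w : 'I_m.

Lemma cycle_adjE a b : cycle_adj a b = (b == ordS a) || (a == ordS b).
Proof. by []. Qed.

Lemma cycle_adj_ordS : {mono @ordS m : a b / cycle_adj a b}.
Proof. by move=> a b; rewrite !cycle_adjE !(inj_eq (@ordS_inj m)). Qed.

Lemma val_ordS a : (ordS a : nat) = if a.+1 == m then 0 else a.+1.
Proof.
rewrite /=; case: eqP => [->|ne]; rewrite ?modnn // modn_small //.
by have := ltn_ord a; lia.
Qed.

Lemma val_iter_ordS k a : (iter k (@ordS m) a : nat) = (a + k) %% m.
Proof.
elim: k => [|k IHk]; first by rewrite addn0 modn_small.
by rewrite iterS /= IHk -addn1 modnDml -addnA addn1.
Qed.

Lemma iter_ordS_neq k a : 0 < k < m -> iter k (@ordS m) a != a.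
Proof.
case/andP=> k_gt0 k_lt_m; apply/eqP => /(congr1 (@nat_of_ord m)) /eqP.
rewrite val_iter_ordS -[X in _ == X](modn_small (ltn_ord a)) -[X in _ == X %% m]addn0.
by rewrite eqn_modDl mod0n modn_small // gtn_eqF.
Qed.

(* The distance in C_m capped at 2, which is the distance inside a copy of
   C_m in the lexicographic product. *)
Definition cdist2 w a : nat := if w == a then 0 else if cycle_adj w a then 1 else 2.

Lemma cdist2_sep_window w a : cdist2 w a != cdist2 w (ordS a) ->
  [\/ ordS w = a, w = a, w = ordS a | w = ordS (ordS a)].
Proof.
rewrite /cdist2 !cycle_adjE (inj_eq (@ordS_inj m)).
have [->|_] := eqVneq w a; first by move=> _; apply: Or42.
have [->|_] := eqVneq w (ordS a); first by move=> _; apply: Or43.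
have [->|_] := eqVneq a (ordS w); first by move=> _; apply: Or41.
by have [->|] := eqVneq w (ordS (ordS a)); first by move=> _; apply: Or44.
Qed.

Lemma window_cdist2_sep w a : 3 < m ->
  [\/ ordS w = a, w = a, w = ordS a | w = ordS (ordS a)] ->
  cdist2 w a != cdist2 w (ordS a).
Proof.
move=> m_gt3.
have S1 (x : 'I_m) : (ordS x == x) = false.
  by apply: negbTE; apply: (@iter_ordS_neq 1); lia.
have S2 (x : 'I_m) : (ordS (ordS x) == x) = false.
  by apply: negbTE; apply: (@iter_ordS_neq 2); lia.
have S3 (x : 'I_m) : (ordS (ordS (ordS x)) == x) = false.
  by apply: negbTE; apply: (@iter_ordS_neq 3); lia.
have [S1' S2' S3'] : [/\ forall x : 'I_m, (x == ordS x) = false,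
  forall x : 'I_m, (x == ordS (ordS x)) = false &
  forall x : 'I_m, (x == ordS (ordS (ordS x))) = false].
  by split=> x; rewrite eq_sym.
rewrite /cdist2 !cycle_adjE !(inj_eq (@ordS_inj m)).
by case=> [<-|->|->|->]; rewrite ?eqxx ?S1 ?S2 ?S3 ?S1' ?S2' ?S3' ?orbT.
Qed.

Lemma ceil_div4_leq_separating (S : {set 'I_m}) :
  (forall a, exists2 w, w \in S & cdist2 w a != cdist2 w (ordS a)) ->
  ceil_div4 m <= #|S|.
Proof.
move=> S_sep.
(* walk (w, k) is w + 1 - k, so by cdist2_sep_window every edge a -- a+1
   separated by w starts at some walk (w, k). *)
pose walk (p : 'I_m * 'I_4) := iter p.2 (@ord_pred m) (ordS p.1).
have walk_onto : [set: 'I_m] \subset walk @: setX S [set: 'I_4].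
  apply/subsetP => a _; have [w wS /cdist2_sep_window] := S_sep a.
  have walkE (k : 'I_4) : walk (w, k) = iter k (@ord_pred m) (ordS w) by [].
  case=> [Sw|wa|wSa|wSSa].
  - by apply/imsetP; exists (w, inord 0); rewrite ?inE ?wS // walkE inordK.
  - apply/imsetP; exists (w, inord 1); rewrite ?inE ?wS // walkE inordK //=.
    by rewrite ordSK.
  - apply/imsetP; exists (w, inord 2); rewrite ?inE ?wS // walkE inordK //= ordSK.
    by rewrite wSa ordSK.
  apply/imsetP; exists (w, inord 3); rewrite ?inE ?wS // walkE inordK //= ordSK.
  by rewrite wSSa !ordSK.
have : #|[set: 'I_m]| <= #|S| * #|[set: 'I_4]|.
  by rewrite -cardsX; apply: leq_trans (subset_leq_card walk_onto) (leq_imset_card _ _).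
rewrite !cardsT !card_ord /ceil_div4; lia.
Qed.

Lemma exists_sep_mod4 a : 3 < m ->
  exists2 w : 'I_m, w %% 4 == 0 & cdist2 w a != cdist2 w (ordS a).
Proof.
move=> m_gt3.
suff [w w4 w_win] : exists2 w : 'I_m, w %% 4 == 0 &
    [\/ ordS w = a, w = a, w = ordS a | w = ordS (ordS a)].
  by exists w => //; apply: window_cdist2_sep.
have a_lt := ltn_ord a.
have [Sa_m|Sa_m] := eqVneq a.+1 m.
  by exists (ordS a); [rewrite val_ordS Sa_m eqxx | apply: Or43].
have valSa : (ordS a : nat) = a.+1 by rewrite val_ordS (negbTE Sa_m).
have [SSa_m|SSa_m] := eqVneq a.+2 m.
  by exists (ordS (ordS a)); [rewrite val_ordS valSa SSa_m eqxx | apply: Or44].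
have valSSa : (ordS (ordS a) : nat) = a.+2 by rewrite val_ordS valSa (negbTE SSa_m).
have [a4|a4] := eqVneq (a %% 4) 0; first by exists a; [apply/eqP | apply: Or42].
have [Sa4|Sa4] := eqVneq (a.+1 %% 4) 0.
  by exists (ordS a); [rewrite valSa; apply/eqP | apply: Or43].
have [SSa4|SSa4] := eqVneq (a.+2 %% 4) 0.
  by exists (ordS (ordS a)); [rewrite valSSa; apply/eqP | apply: Or44].
have pred_lt : a.-1 < m by lia.
exists (Ordinal pred_lt); first by apply/eqP => /=; lia.
by apply: Or41; apply: ord_inj; rewrite val_ordS /=; case: eqP; lia.
Qed.

Lemma exists_nonadj_mod4 a : 6 < m ->
  exists2 w : 'I_m, w %% 4 == 0 & ~~ cycle_adj w a.
Proof.
move=> m_gt6; have a_lt := ltn_ord a.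
have [lt0 lt4] : 0 < m /\ 4 < m by lia.
have [adj0|] := boolP (cycle_adj (Ordinal lt0) a); last by exists (Ordinal lt0).
exists (Ordinal lt4) => //; move: adj0.
rewrite !cycle_adjE -!(inj_eq (@ord_inj m)) !val_ordS /=.
by case: (a.+1 =P m); case: (1 =P m); case: (5 =P m); lia.
Qed.

Lemma card_mod4 : #|[set w : 'I_m | w %% 4 == 0]| <= ceil_div4 m.
Proof.
have div4_lt w : w %/ 4 < ceil_div4 m by have := ltn_ord w; rewrite /ceil_div4; lia.
rewrite -[X in _ <= X]card_ord; apply: (@leq_card_in _ _ (fun w => Ordinal (div4_lt w))).
move=> w w'; rewrite !inE => /eqP w4 /eqP w'4 /(congr1 val) /= eq_div.
by apply: val_inj; rewrite /= (divn_eq w 4) (divn_eq w' 4) eq_div w4 w'4.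
Qed.
End Cycle.

Section LexCycles.
Variables (t : nat) (e : rel 'I_t) (n : 'I_t -> nat).
Hypothesis e_irr : irreflexive e.

Local Notation V := {i : 'I_t & 'I_(n i)}.
Local Notation E := (lex_cycles e n).
Local Notation Tg := (Tagged (fun i => 'I_(n i))).

Lemma lex_cycles_copy i (p q : 'I_(n i)) : E (Tg p) (Tg q) = cycle_adj p q.
Proof. by rewrite /lex_cycles /= e_irr eqxx tagged_asE. Qed.

Lemma lex_cycles_cross (x y : V) : tag x != tag y -> E x y = e (tag x) (tag y).
Proof. by move=> neq_xy; rewrite /lex_cycles (negbTE neq_xy) orbF. Qed.

Definition rotate_copy i (x : V) : V :=
  Tagged (fun j => 'I_(n j)) (if tag x == i then ordS (tagged x) else tagged x).

Lemma rotate_copy_inj i : injective (rotate_copy i).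
Proof.
move=> [j p] [k q] eq_rot; have /= jk := congr1 tag eq_rot; subst k.
move/eqP: eq_rot; rewrite eq_Tagged /=; case: (j == i) => /eqP; last by move->.
by move/ordS_inj->.
Qed.

Lemma lex_cycles_rotate i : {mono rotate_copy i : x y / E x y}.
Proof.
move=> [j p] [k q]; case: (j =P k) => [jk|/eqP neq_jk]; last by rewrite !lex_cycles_cross.
by subst k; rewrite !lex_cycles_copy; case: (j == i); rewrite ?cycle_adj_ordS.
Qed.

Lemma gdist_other_copy i (s : V) (p q : 'I_(n i)) :
  tag s != i -> gdist E s (Tg p) = gdist E s (Tg q).
Proof.
move=> s_i; have rot_s : rotate_copy i s = s.
  by case: s s_i => j w; rewrite /rotate_copy /= => /negbTE->.
have rot_Tg (r : 'I_(n i)) : rotate_copy i (Tg r) = Tg (ordS r).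
  by rewrite /rotate_copy /= eqxx.
have gdist_iter k : gdist E s (Tg p) = gdist E s (Tg (iter k (@ordS (n i)) p)).
  elim: k => // k ->; rewrite /= -rot_Tg -[in RHS]rot_s.
  by rewrite (gdist_mono (@rotate_copy_inj i) (@lex_cycles_rotate i)).
rewrite (gdist_iter (q + n i - p)); congr (gdist E s (Tg _)); apply: ord_inj.
have p_lt := ltn_ord p; have q_lt := ltn_ord q.
by rewrite val_iter_ordS (_ : p + _ = q + n i) ?modnDr ?modn_small //; lia.
Qed.

Hypotheses (e_sym : symmetric e) (e_nbr : forall i, exists j, e i j).
Hypothesis n_gt0 : forall i, 0 < n i.

Lemma gdist_copy i (w a : 'I_(n i)) : gdist E (Tg w) (Tg a) = cdist2 w a.
Proof.
rewrite /cdist2; have [->|neq_wa] := eqVneq w a; first by apply/eqP; rewrite gdist_eq0.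
have neq_Tg : Tg w != Tg a by rewrite eq_Tagged.
case: ifP => adj_wa; first by apply: gdist_edge; rewrite ?lex_cycles_copy.
have [j eij] := e_nbr i.
have neq_ij : i != j by apply: contraTneq eij => <-; rewrite e_irr.
apply: (gdist_common_nbr (z := Tg (Ordinal (n_gt0 j)))) => //.
- by rewrite lex_cycles_copy adj_wa.
- by rewrite lex_cycles_cross.
- by rewrite lex_cycles_cross 1?eq_sym // e_sym.
Qed.

Definition layer (S : {set V}) i : {set 'I_(n i)} := [set p | Tg p \in S].

Lemma card_layers (S : {set V}) : #|S| = \sum_i #|layer S i|.
Proof.
rewrite -sum1_card (eq_bigr (fun i => \sum_(p : 'I_(n i) | Tg p \in S) 1)); last first.
  by move=> i _; rewrite -sum1_card; apply: eq_bigl => p; rewrite inE.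
rewrite (sig_big_dep (fun i => true) (fun i p => Tg p \in S) (fun i p => 1)) /=.
by apply: eq_bigl => -[i p].
Qed.

Lemma card_layerT i : #|layer [set: V] i| = n i.
Proof. by rewrite -[RHS]card_ord; apply: eq_card => p; rewrite !inE. Qed.

Lemma layer_resolving (S : {set V}) : local_resolving E S ->
  forall i (a : 'I_(n i)), exists2 w, w \in layer S i & cdist2 w a != cdist2 w (ordS a).
Proof.
move=> /forallP S_res i a.
have edge_a : E (Tg a) (Tg (ordS a)) by rewrite lex_cycles_copy cycle_adjE eqxx.
have /existsP[[j w] /andP[wS sep]] :=
  implyP (forallP (S_res (Tg a)) (Tg (ordS a))) edge_a.
case: (j =P i) => [ji|/eqP neq_ji]; last first.
  by rewrite (gdist_other_copy _ (ordS a)) ?eqxx in sep.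
by subst j; exists w; rewrite ?inE // -!gdist_copy.
Qed.

Definition mod4_vertices : {set V} := [set x : V | tagged x %% 4 == 0].

Lemma layer_mod4 i : layer mod4_vertices i = [set w : 'I_(n i) | w %% 4 == 0].
Proof. by apply/setP => p; rewrite !inE. Qed.

Lemma mod4_resolving : (forall i, 6 < n i) -> local_resolving E mod4_vertices.
Proof.
move=> n_gt6; apply/forallP => -[i a]; apply/forallP => -[j b]; apply/implyP.
case: (i =P j) => [ij|/eqP neq_ij].
  subst j; rewrite lex_cycles_copy cycle_adjE.
  have sep (c : 'I_(n i)) : exists2 w : 'I_(n i),
      w %% 4 == 0 & gdist E (Tg w) (Tg c) != gdist E (Tg w) (Tg (ordS c)).
    have [w w4 w_sep] := exists_sep_mod4 c (leq_trans (isT : 3 < 7) (n_gt6 i)).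
    by exists w; rewrite ?gdist_copy.
  case/orP=> /eqP->; [have [w w4 w_sep] := sep a | have [w w4 w_sep] := sep b];
    by apply/existsP; exists (Tg w); rewrite inE w4 //= eq_sym.
rewrite lex_cycles_cross //= => eij.
have [w w4 far_wa] := exists_nonadj_mod4 a (n_gt6 i).
apply/existsP; exists (Tg w); rewrite inE w4 /= gdist_copy.
rewrite (@gdist_edge _ _ (Tg w)); last by rewrite lex_cycles_cross.
  by rewrite /cdist2 (negbTE far_wa); case: ifP.
by apply: contra neq_ij => /eqP/(congr1 tag)/= ->.
Qed.
End LexCycles.

Theorem proposition3 (t : nat) (e : rel 'I_t) (n : 'I_t -> nat) :
  2 <= t ->
  symmetric e -> irreflexive e ->
  (forall x y : 'I_t, connect e x y) ->
  (forall i, 7 <= n i) ->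
  ldim (lex_cycles e n) = \sum_(i < t) ceil_div4 (n i).
Proof.
move=> t_gt1 e_sym e_irr e_conn n_ge7.
have e_nbr : forall i, exists j, e i j by apply: connected_has_nbr; rewrite ?card_ord.
have n_gt0 i : 0 < n i by apply: leq_trans (n_ge7 i).
apply/eqP; rewrite eqn_leq; apply/andP; split.
  apply: leq_trans (ldim_leq (mod4_resolving e_irr e_sym e_nbr n_gt0 n_ge7)) _.
  by rewrite card_layers; apply: leq_sum => i _; rewrite layer_mod4 card_mod4.
apply: leq_ldim => [|S /(layer_resolving e_irr e_sym e_nbr n_gt0) S_sep].
  rewrite -cardsT card_layers; apply: leq_sum => i _.
  by rewrite card_layerT /ceil_div4; have := n_gt0 i; lia.
rewrite card_layers; apply: leq_sum => i _.
exact: ceil_div4_leq_separating (@S_sep i).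
Qed.
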